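(* In the setting described in the context, suppose $T$ and $A$ are irreducible and $r_A>1$. Then for $1<|z|<r_A$, $\det(I-\Gamma_A^*(z))=0$ if and only if $\det(I-R^*(z))=0$.
   Context: Let $M_0,M$ be positive integers. Consider a discrete-time Markov chain $\{(X_n,S_n)\}_{n\ge0}$ of M/G/1 type with state space $\{(0,j):1\le j\le M_0\}\cup\{(k,j):k\ge1,1\le j\le M\}$ (level $k$ = states with first coordinate $k$), with transition matrix in lexicographic order \[ T=\begin{pmatrix}B(0)&B(1)&B(2)&\cdots\\ C(0)&A(1)&A(2)&\cdots\\ O&A(0)&A(1)&\cdots\\ O&O&A(0)&\cdots\\ \vdots&\vdots&\vdots&\ddots\end{pmatrix}, \] with nonnegative blocks $A(k)$ ($M\times M$), $B(0)$, $B(k)$ ($k\ge1$), $C(0)$ of compatible sizes; $A=\sum_{k\ge0}A(k)$ stochastic, $B(0)e+\sum_{k\ge1}B(k)e=e$. $A^*(z)=\sum_{k\ge0}z^kA(k)$ with convergence radius $r_A$, $\Gamma_A^*(z)=z^{-1}A^*(z)$. $G$ is the $M\times M$ matrix with $[G]_{i,j}=\Pr[S_{a(k)}=j\mid X_0=k+1,S_0=i]$ ($a(k)=\inf\{n\ge1:X_n=k\}$), the minimal nonnegative solution of $X=\sum_k A(k)X^k$. $U(k)=\sum_{m\ge k+1}A(m)G^{m-k-1}$ ($k\ge0$), $R(k)=U(k)(I-U(0))^{-1}$ ($k\ge1$), $R^*(z)=\sum_{k\ge1}z^kR(k)$. *)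

From HB Require Import structures.
From mathcomp Require Import all_boot all_order all_algebra.
From mathcomp Require Import complex.
From mathcomp Require Import all_classical all_reals all_analysis.
Set Implicit Arguments.
Unset Strict Implicit.
Unset Printing Implicit Defensive.
Import Order.TTheory GRing.Theory Num.Theory.
Import numFieldNormedType.Exports numFieldTopology.Exports.
Import ComplexField.
Local Open Scope classical_set_scope.
Local Open Scope ring_scope.

Section MG1.
Context {R : realType}.

Definition mxpow {n : nat} (X : 'M[R]_n) (k : nat) : 'M[R]_n :=
  iter k (mulmx X) 1%:M.

(** Entrywise sum of an infinite series of real matrices
    (junk value if some entry series diverges). *)
Definition mxsum {m n : nat} (F : nat -> 'M[R]_(m, n)) : 'M[R]_(m, n) :=
  \matrix_(i, j) limn (series (fun k => F k i j)).

Definition mxsum_cvg {m n : nat} (F : nat -> 'M[R]_(m, n)) : Prop :=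
  forall i j, cvgn (series (fun k => F k i j)).

Definition cmxsum {m n : nat} (F : nat -> 'M[R[i]]_(m, n)) : 'M[R[i]]_(m, n) :=
  \matrix_(i, j) limn (series (fun k => (F k i j : (R[i])^o))).

Definition toC {m n : nat} (X : 'M[R]_(m, n)) : 'M[R[i]]_(m, n) :=
  map_mx (real_complex R) X.

Definition mx_nonneg {m n : nat} (X : 'M[R]_(m, n)) : Prop :=
  forall i j, 0 <= X i j.

Definition cmod (z : R[i]) : R := Normc.normc z.

Variables (M0 M : nat).
Variable A : nat -> 'M[R]_M.
Variable B0 : 'M[R]_M0.
Variable B : nat -> 'M[R]_(M0, M).    (* B(k) for k >= 1; B 0 is unused *)
Variable C0 : 'M[R]_(M, M0).

Definition Abar : 'M[R]_M := mxsum A.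

Definition Astar (z : R[i]) : 'M[R[i]]_M :=
  cmxsum (fun k => z ^+ k *: toC (A k)).
Definition GammaAstar (z : R[i]) : 'M[R[i]]_M := z^-1 *: Astar z.

Definition rA : \bar R :=
  ereal_sup [set r%:E | r in
    [set r : R | 0 <= r /\ forall i j, cvgn (series (fun k => `|A k i j| * r ^+ k))]].

Definition solves_G_eq (X : 'M[R]_M) : Prop :=
  mxsum_cvg (fun k => A k *m mxpow X k) /\ mxsum (fun k => A k *m mxpow X k) = X.

Definition is_minimal_nonneg_solution (G : 'M[R]_M) : Prop :=
  [/\ mx_nonneg G, solves_G_eq G &
      forall X, mx_nonneg X -> solves_G_eq X -> forall i j, G i j <= X i j].

Variable G : 'M[R]_M.

(** U(k) = sum_{m >= k+1} A(m) G^{m-k-1}  (reindexed m = m' + k + 1). *)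
Definition Umat (k : nat) : 'M[R]_M := mxsum (fun m => A (m + k.+1) *m mxpow G m).

Definition Rmat (k : nat) : 'M[R]_M := Umat k *m invmx (1%:M - Umat 0).

Definition Rstar (z : R[i]) : 'M[R[i]]_M :=
  cmxsum (fun k => if k == 0%N then 0 else z ^+ k *: toC (Rmat k)).

(** State space: inl j = (0, j) with j : 'I_M0 ; inr (k, j) = (k+1, j). *)
Definition state : Type := ('I_M0 + (nat * 'I_M))%type.

Definition Tmat (x y : state) : R :=
  match x, y with
  | inl i, inl j => B0 i j
  | inl i, inr (l, j) => B l.+1 i j
  | inr (k, i), inl j => if k == 0%N then C0 i j else 0
  | inr (k, i), inr (l, j) => if (k <= l.+1)%N then A (l.+1 - k) i j else 0
  end.

(** y is reachable from x along transitions of positive probability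
    (equivalently (T^n)_{xy} > 0 for some n >= 0). *)
Inductive T_reach (x : state) : state -> Prop :=
  | T_reach_refl : T_reach x x
  | T_reach_step y z : T_reach x y -> 0 < Tmat y z -> T_reach x z.

Definition T_irreducible : Prop := forall x y, T_reach x y.

Definition A_irreducible : Prop :=
  forall i j, exists n, 0 < mxpow Abar n i j.

End MG1.

From HB Require Import structures.
From mathcomp Require Import all_boot all_order all_algebra.
From mathcomp Require Import complex.
From mathcomp Require Import all_classical all_reals all_analysis.
From mathcomp Require Import ring.
Import Order.TTheory GRing.Theory Num.Theory.
Import numFieldNormedType.Exports numFieldTopology.Exports.
Import ComplexField.
Local Open Scope classical_set_scope.
Local Open Scope ring_scope.

(* For |z| > 1 the matrix I - z^-1 G is invertible since G is substochastic (it is dominated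
   by the substochastic limit of the iteration X |-> sum_k A(k) X^k started at 0).
   The recursions U(k) = A(k+1) + U(k+1) G and G = A(0) + U(0) G give, for 1 < |z| < r_A,
   the factorization
     I - Gamma_A^*(z) = (I - R^*(z)) (I - U(0)) (I - z^-1 G),
   where sum_k z^k U(k) converges because U(k) = O(r^-k) for some r in (|z|, r_A).
   Finally I - U(0) is invertible: if w = U(0) w with w <> 0, then on the coordinates where
   |w| is maximal the rows of U(0) are stochastic, and this saturation propagates along the
   transitions of T from level 2 so that level 0 is never reached, contradicting the
   irreducibility of T. Hence the two determinants vanish together. *)

Section MatrixSeries.
Context {K : numFieldType}.

Lemma cvgn_sum {I : Type} (r : seq I) (P : pred I) {f : I -> nat -> K} {l : I -> K} :
  (forall i, f i @ \oo --> l i) ->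
  (fun n => \sum_(i <- r | P i) f i n) @ \oo --> \sum_(i <- r | P i) l i.
Proof. by move=> fl; apply: cvg_big => //; exact: add_continuous. Qed.

Lemma cvg_series_shift {u : nat -> K} {l : K} :
  series u @ \oo --> l -> series (fun k => u k.+1) @ \oo --> l - u 0%N.
Proof.
move=> ul; have -> : series (fun k => u k.+1) = (fun n => series u n.+1 - u 0%N).
  by apply/funext=> n; rewrite /series /= big_nat_recl //= addrAC subrr add0r.
by apply: cvgB (cvg_cst _); rewrite (cvg_shiftS (series u)).
Qed.

Lemma cvg_series_unshift {u : nat -> K} {l : K} :
  series (fun k => u k.+1) @ \oo --> l -> series u @ \oo --> u 0%N + l.
Proof.
move=> ul; rewrite -(cvg_shiftS (series u)).
have -> : [sequence series u n.+1]_n = (fun n => u 0%N + series (fun k => u k.+1) n).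
  by apply/funext=> n; rewrite /series /= big_nat_recl.
exact: cvgD (cvg_cst _) ul.
Qed.

Definition is_mxsum {m n} (F : nat -> 'M[K]_(m, n)) (S : 'M[K]_(m, n)) :=
  forall i j, series (fun k => F k i j) @ \oo --> S i j.

Lemma eq_is_mxsum {m n} {F F' : nat -> 'M[K]_(m, n)} {S} :
  F =1 F' -> is_mxsum F S -> is_mxsum F' S.
Proof. by move=> eF; have -> : F' = F by apply/funext=> k; rewrite eF. Qed.

Lemma is_mxsum_unique {m n} {F : nat -> 'M[K]_(m, n)} {S S'} :
  is_mxsum F S -> is_mxsum F S' -> S = S'.
Proof. by move=> FS FS'; apply/matrixP=> i j; exact: cvg_unique (FS i j) (FS' i j). Qed.

Lemma is_mxsumD {m n} {F F' : nat -> 'M[K]_(m, n)} {S S'} :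
  is_mxsum F S -> is_mxsum F' S' -> is_mxsum (fun k => F k + F' k) (S + S').
Proof.
move=> FS FS' i j; rewrite mxE.
have -> : (fun k => (F k + F' k) i j) = (fun k => F k i j) + (fun k => F' k i j).
  by apply/funext=> k; rewrite !mxE.
by rewrite seriesD; exact: cvgD.
Qed.

Lemma is_mxsumZ {m n} {F : nat -> 'M[K]_(m, n)} {S} (c : K) :
  is_mxsum F S -> is_mxsum (fun k => c *: F k) (c *: S).
Proof.
move=> FS i j; rewrite mxE.
have -> : series (fun k => (c *: F k) i j) = (fun N => c * series (fun k => F k i j) N).
  by apply/funext=> N; rewrite /series /= mulr_sumr; apply: eq_bigr => k _; rewrite mxE.
exact: cvgM (cvg_cst _) (FS i j).
Qed.

Lemma is_mxsum_mulmxr {m n p} {F : nat -> 'M[K]_(m, n)} {S} (X : 'M[K]_(n, p)) :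
  is_mxsum F S -> is_mxsum (fun k => F k *m X) (S *m X).
Proof.
move=> FS i j; rewrite mxE.
have -> : series (fun k => (F k *m X) i j) =
          (fun N => \sum_l series (fun k => F k i l) N * X l j).
  apply/funext=> N; rewrite /series /=; under eq_bigr do rewrite mxE.
  by rewrite exchange_big /=; apply: eq_bigr => l _; rewrite mulr_suml.
by apply: cvgn_sum => l; exact: cvgM (FS i l) (cvg_cst _).
Qed.

Lemma is_mxsum_row_sum {m n} {F : nat -> 'M[K]_(m, n)} {S} (i : 'I_m) :
  is_mxsum F S -> series (fun k => \sum_j F k i j) @ \oo --> \sum_j S i j.
Proof.
move=> FS; have -> : series (fun k => \sum_j F k i j) =
                     (fun N => \sum_j series (fun k => F k i j) N).
  by apply/funext=> N; rewrite /series /= exchange_big.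
by apply: cvgn_sum => j; exact: FS.
Qed.

Lemma is_mxsum_shift {m n} {F : nat -> 'M[K]_(m, n)} {S} :
  is_mxsum F S -> is_mxsum (fun k => F k.+1) (S - F 0%N).
Proof. by move=> FS i j; rewrite !mxE; exact: cvg_series_shift (FS i j). Qed.

Lemma is_mxsum_unshift {m n} {F : nat -> 'M[K]_(m, n)} {S} :
  is_mxsum (fun k => F k.+1) S -> is_mxsum F (F 0%N + S).
Proof. by move=> FS i j; rewrite mxE; exact: cvg_series_unshift (FS i j). Qed.

End MatrixSeries.

Section NonnegativeSeries.
Context {R : realType}.
Implicit Types (u v : nat -> R) (l : R).

Lemma ge0_series_le_lim {u l} : (forall k, 0 <= u k) ->
  series u @ \oo --> l -> forall n, series u n <= l.
Proof.
move=> u0 ul n; rewrite -(cvg_lim (@Rhausdorff R) ul).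
apply: nondecreasing_cvgn_le; last by apply/cvg_ex; exists l.
by apply: nondecreasing_series => k _ _; exact: u0.
Qed.

Lemma ge0_term_le_lim {u l} : (forall k, 0 <= u k) ->
  series u @ \oo --> l -> forall k, u k <= l.
Proof.
move=> u0 ul k; apply: le_trans (ge0_series_le_lim u0 ul k.+1).
by rewrite /series /= big_nat_recr //= lerDr sumr_ge0.
Qed.

Lemma ge0_lim_series {u l} : (forall k, 0 <= u k) -> series u @ \oo --> l -> 0 <= l.
Proof. by move=> u0 ul; exact: le_trans (u0 0%N) (ge0_term_le_lim u0 ul 0%N). Qed.

Lemma ler_lim_series {u v lu lv} : (forall k, u k <= v k) ->
  series u @ \oo --> lu -> series v @ \oo --> lv -> lu <= lv.
Proof.
move=> uv ul vl; rewrite -(cvg_lim (@Rhausdorff R) ul) -(cvg_lim (@Rhausdorff R) vl).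
by apply: lim_series_le => //; apply/cvg_ex; [exists lu | exists lv].
Qed.

Lemma ge0_series_le_cvg {u v lv} : (forall k, 0 <= u k) -> (forall k, u k <= v k) ->
  series v @ \oo --> lv -> exists2 lu, series u @ \oo --> lu & lu <= lv.
Proof.
move=> u0 uv vl; have cu : cvgn (series u).
  apply: (series_le_cvg u0 _ uv); first by move=> k; exact: le_trans (u0 k) (uv k).
  by apply/cvg_ex; exists lv.
by exists (limn (series u)) => //; exact: ler_lim_series uv cu vl.
Qed.

Lemma series_norm_le_cvg {u v} : (forall k, `|u k| <= v k) ->
  cvgn (series v) -> cvgn (series u).
Proof.
move=> uv cv; apply: normed_cvg; apply: (series_le_cvg _ _ uv cv) => k //.
exact: le_trans (normr_ge0 _) (uv k).
Qed.

Lemma eq_lim_series_termwise {u v l} : (forall k, 0 <= u k) -> (forall k, u k <= v k) ->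
  series u @ \oo --> l -> series v @ \oo --> l -> u =1 v.
Proof.
move=> u0 uv ul vl k; apply/eqP; rewrite eq_le uv /= -subr_le0.
have vu : series (fun k => v k - u k) @ \oo --> 0.
  by rewrite -(subrr l) seriesD seriesN; exact: cvgB.
by apply: ge0_term_le_lim vu k => k'; rewrite subr_ge0.
Qed.

Lemma ge0_series_tail_cvg {u l} (p : nat) : (forall k, 0 <= u k) -> series u @ \oo --> l ->
  exists2 l', series (fun k => u (k + p)%N) @ \oo --> l' & l' <= l.
Proof.
move=> u0 ul; have tail_le n : series (fun k => u (k + p)%N) n <= l.
  apply: le_trans (ge0_series_le_lim u0 ul (n + p)).
  rewrite /series /= (@big_cat_nat _ _ _ p 0 (n + p)) //= ?leq_addl //.
  have -> : \sum_(p <= i < n + p) u i = \sum_(0 <= i < n) u (i + p)%N.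
    by rewrite -{1}(add0n p) big_addn addnK.
  by rewrite lerDr sumr_ge0.
have ct : cvgn (series (fun k => u (k + p)%N)).
  apply: nondecreasing_is_cvgn; first by apply: nondecreasing_series => k _ _.
  by exists l => _ [n _ <-].
exists (limn (series (fun k => u (k + p)%N))) => //.
by apply: limr_le => //; near=> n; exact: tail_le.
Unshelve. all: by end_near.
Qed.

End NonnegativeSeries.

Section NonnegativeMatrices.
Context {R : realType}.

Definition mx_le {m n} (X Y : 'M[R]_(m, n)) := forall i j, X i j <= Y i j.

Definition substochastic {n} (X : 'M[R]_n) := mx_nonneg X /\ forall i, \sum_j X i j <= 1.

Lemma mxpowSr {n} (X : 'M[R]_n) k : mxpow X k.+1 = mxpow X k *m X.
Proof.
elim: k => [|k IH]; first by rewrite /mxpow /= mulmx1 mul1mx.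
by change (X *m mxpow X k.+1 = (X *m mxpow X k) *m X); rewrite IH mulmxA.
Qed.

Lemma mxpowD {n} (X : 'M[R]_n) a b : mxpow X (a + b) = mxpow X a *m mxpow X b.
Proof.
elim: a => [|a IH]; first by rewrite mul1mx.
by change (X *m mxpow X (a + b) = (X *m mxpow X a) *m mxpow X b); rewrite IH mulmxA.
Qed.

Lemma mx_nonneg_mul {m n p} {X : 'M[R]_(m, n)} {Y : 'M[R]_(n, p)} :
  mx_nonneg X -> mx_nonneg Y -> mx_nonneg (X *m Y).
Proof. by move=> X0 Y0 i j; rewrite mxE sumr_ge0 // => l _; rewrite mulr_ge0. Qed.

Lemma mx_nonneg1 {n} : mx_nonneg (1%:M : 'M[R]_n).
Proof. by move=> i j; rewrite mxE; case: (i == j). Qed.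

Lemma mx_nonneg_pow {n} {X : 'M[R]_n} (k : nat) : mx_nonneg X -> mx_nonneg (mxpow X k).
Proof.
by move=> X0; elim: k => [|k IH]; [exact: mx_nonneg1 | exact: mx_nonneg_mul].
Qed.

Lemma row_sum1 {n} (i : 'I_n) : \sum_j (1%:M : 'M[R]_n) i j = 1.
Proof.
rewrite (bigD1 i) //= big1 ?mxE ?eqxx ?addr0 // => j /negPf.
by rewrite mxE eq_sym => ->.
Qed.

Lemma entry_le_row_sum {m n} {X : 'M[R]_(m, n)} i j : mx_nonneg X -> X i j <= \sum_l X i l.
Proof. by move=> X0; rewrite (bigD1 j) //= lerDl sumr_ge0. Qed.

Lemma row_sum_mulmx_le {m n} {X : 'M[R]_(m, n)} {Y : 'M[R]_n} i :
  mx_nonneg X -> substochastic Y -> \sum_j (X *m Y) i j <= \sum_j X i j.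
Proof.
move=> X0 [Y0 Y1]; under eq_bigr do rewrite mxE.
rewrite exchange_big /=; apply: ler_sum => l _.
by rewrite -mulr_sumr -[leRHS]mulr1 ler_wpM2l.
Qed.

Lemma row_sum_mulmx_eq {m n} {X : 'M[R]_(m, n)} {Y : 'M[R]_n} i :
  mx_nonneg X -> substochastic Y -> \sum_j (X *m Y) i j = \sum_j X i j ->
  forall l, 0 < X i l -> \sum_j Y l j = 1.
Proof.
move=> X0 [Y0 Y1] XYX l Xil.
have XYE : \sum_j (X *m Y) i j = \sum_k X i k * \sum_j Y k j.
  under eq_bigr do rewrite mxE.
  by rewrite exchange_big; apply: eq_bigr => k _; rewrite mulr_sumr.
have defect0 : \sum_k X i k * (1 - \sum_j Y k j) = 0.
  by under eq_bigr do rewrite mulrBr mulr1; rewrite sumrB -XYE XYX subrr.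
have defect_ge0 k : true -> 0 <= X i k * (1 - \sum_j Y k j).
  by move=> _; rewrite mulr_ge0 // subr_ge0.
have /eqP := (psumr_eq0P defect_ge0 defect0) l isT.
by rewrite mulf_eq0 gt_eqF //= subr_eq0 eq_sym => /eqP.
Qed.

Lemma substochastic_mul {n} {X Y : 'M[R]_n} :
  substochastic X -> substochastic Y -> substochastic (X *m Y).
Proof.
move=> [X0 X1] sY; split=> [|i]; first exact: mx_nonneg_mul sY.1.
exact: le_trans (row_sum_mulmx_le i X0 sY) (X1 i).
Qed.

Lemma substochastic1 {n} : substochastic (1%:M : 'M[R]_n).
Proof. by split=> [|i]; rewrite ?row_sum1 //; exact: mx_nonneg1. Qed.

Lemma substochastic0 {n} : substochastic (0 : 'M[R]_n).
Proof. by split=> [i j|i]; rewrite ?mxE // big1 // => j _; rewrite mxE. Qed.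

Lemma substochastic_pow {n} {X : 'M[R]_n} (k : nat) : substochastic X -> substochastic (mxpow X k).
Proof.
by move=> sX; elim: k => [|k IH]; [exact: substochastic1 | exact: substochastic_mul].
Qed.

Lemma substochastic_entry_le1 {n} {X : 'M[R]_n} i j : substochastic X -> X i j <= 1.
Proof. by move=> [X0 X1]; exact: le_trans (entry_le_row_sum i j X0) (X1 i). Qed.

Lemma mx_le_mul {m n p} {X X' : 'M[R]_(m, n)} {Y Y' : 'M[R]_(n, p)} :
  mx_nonneg X -> mx_nonneg Y -> mx_le X X' -> mx_le Y Y' -> mx_le (X *m Y) (X' *m Y').
Proof. by move=> X0 Y0 XX' YY' i j; rewrite !mxE; apply: ler_sum => l _; exact: ler_pM. Qed.

Lemma mx_le_pow {n} {X Y : 'M[R]_n} (k : nat) :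
  mx_nonneg X -> mx_le X Y -> mx_le (mxpow X k) (mxpow Y k).
Proof.
move=> X0 XY; elim: k => [//|k IH].
by apply: mx_le_mul => //; exact: mx_nonneg_pow.
Qed.

Lemma cvg_mulmx {m n p} {X : nat -> 'M[R]_(m, n)} {Y : nat -> 'M[R]_(n, p)}
    {X' : 'M[R]_(m, n)} {Y' : 'M[R]_(n, p)} :
  (forall i j, (fun t => X t i j) @ \oo --> X' i j) ->
  (forall i j, (fun t => Y t i j) @ \oo --> Y' i j) ->
  forall i j, (fun t => (X t *m Y t) i j) @ \oo --> (X' *m Y') i j.
Proof.
move=> XX' YY' i j; rewrite mxE; under eq_fun do rewrite mxE.
by apply: cvgn_sum => l; exact: cvgM.
Qed.

Lemma cvg_mxpow {n} {X : nat -> 'M[R]_n} {Y : 'M[R]_n} :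
  (forall i j, (fun t => X t i j) @ \oo --> Y i j) ->
  forall k i j, (fun t => mxpow (X t) k i j) @ \oo --> mxpow Y k i j.
Proof.
move=> XY; elim=> [|k IH] i j; first exact: cvg_cst.
exact: cvg_mulmx.
Qed.

End NonnegativeMatrices.

Section ComplexMatrices.
Context {R : realType}.
Local Open Scope complex_scope.

Lemma cmod_real (r : R) : cmod r%:C = `|r|.
Proof. by rewrite /cmod /Normc.normc /= expr0n /= addr0 sqrtr_sqr. Qed.

Lemma normc_cmod (x : R[i]) : `|x| = (cmod x)%:C.
Proof. by case: x => a b; rewrite normc_def. Qed.

Lemma cmod_ge0 (x : R[i]) : 0 <= cmod x.
Proof. by case: x => a b; rewrite /cmod /Normc.normc /= sqrtr_ge0. Qed.

Lemma cmodM (x y : R[i]) : cmod (x * y) = cmod x * cmod y.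
Proof. exact: Normc.normcM. Qed.

Lemma cmodX (x : R[i]) k : cmod (x ^+ k) = cmod x ^+ k.
Proof.
elim: k => [|k IH]; first by rewrite !expr0 /cmod Normc.normc1.
by rewrite !exprS cmodM IH.
Qed.

Lemma normr_Re_le_cmod (x : R[i]) : `|complex.Re x| <= cmod x.
Proof.
case: x => a b; rewrite /cmod /Normc.normc /= -sqrtr_sqr.
by apply: ler_wsqrtr; rewrite lerDl sqr_ge0.
Qed.

Lemma normr_Im_le_cmod (x : R[i]) : `|complex.Im x| <= cmod x.
Proof.
case: x => a b; rewrite /cmod /Normc.normc /= -sqrtr_sqr.
by apply: ler_wsqrtr; rewrite lerDr sqr_ge0.
Qed.

Lemma cvg_real_complex {x : nat -> R} {a : R} : x @ \oo --> a ->
  (fun n => (x n)%:C : (R[i])^o) @ \oo --> (a%:C : (R[i])^o).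
Proof.
move/cvgrPdist_lt => xa; apply/cvgrPdist_lt => -[e1 e2].
rewrite ltcE => /andP[/eqP/= -> Re_gt0] /=.
near=> n; rewrite -rmorphB normc_cmod cmod_real ltcR.
by near: n; exact: xa.
Unshelve. all: by end_near.
Qed.

(* R[i] carries no complete normed structure: convergence is proved componentwise. *)
Lemma cmod_series_le_cvg {u : nat -> R[i]} {b : nat -> R} :
  (forall k, cmod (u k) <= b k) -> cvgn (series b) ->
  exists l : R[i], series (u : nat -> (R[i])^o) @ \oo --> (l : (R[i])^o).
Proof.
move=> ub cb.
have cRe : cvgn (series (fun k => complex.Re (u k))).
  by apply: series_norm_le_cvg cb => k; exact: le_trans (normr_Re_le_cmod _) (ub k).
have cIm : cvgn (series (fun k => complex.Im (u k))).
  by apply: series_norm_le_cvg cb => k; exact: le_trans (normr_Im_le_cmod _) (ub k).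
exists ((limn (series (fun k => complex.Re (u k))))%:C +
        'i * (limn (series (fun k => complex.Im (u k))))%:C).
have -> : series u = (fun N => (series (fun k => complex.Re (u k)) N)%:C +
                               'i * (series (fun k => complex.Im (u k)) N)%:C).
  apply/funext => N; rewrite /series /= !rmorph_sum mulr_sumr -big_split /=.
  by apply: eq_bigr => k _; rewrite -complexE.
by apply: cvgD; [|apply: cvgM (cvg_cst _) _]; exact: cvg_real_complex.
Qed.

Lemma is_mxsum_cmxsum {m n} {F : nat -> 'M[R[i]]_(m, n)} :
  (forall i j, exists l : R[i],
     series ((fun k => F k i j) : nat -> (R[i])^o) @ \oo --> (l : (R[i])^o)) ->
  is_mxsum F (cmxsum F).
Proof. by move=> Fl i j; rewrite mxE; have [l Fijl] := Fl i j; rewrite (cvg_lim _ Fijl). Qed.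

Lemma cmxsumE {m n} {F : nat -> 'M[R[i]]_(m, n)} {S} : is_mxsum F S -> cmxsum F = S.
Proof. by move=> FS; apply/matrixP=> i j; rewrite mxE; exact: cvg_lim (FS i j). Qed.

Lemma toC1_sub {n} (X : 'M[R]_n) : toC (1%:M - X) = 1%:M - toC X.
Proof. by rewrite /toC map_mxB map_mx1. Qed.

Lemma substochastic_left_eigenvalue {n} {G : 'M[R]_n} {v : 'rV[R[i]]_n} {z : R[i]} :
  substochastic G -> v != 0 -> v *m toC G = z *: v -> `|z| <= 1.
Proof.
move=> [G0 G1] v_neq0 vG; pose s := \sum_j `|v 0 j|.
have s_gt0 : 0 < s.
  have /rV0Pn [k vk] := v_neq0.
  by apply: lt_le_trans (_ : `|v 0 k| <= s); rewrite ?normr_gt0 // /s (bigD1 k) //= lerDl sumr_ge0.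
rewrite -(ler_pM2r s_gt0) mul1r.
have -> : `|z| * s = \sum_j `|(v *m toC G) 0 j|.
  by rewrite /s mulr_sumr; apply: eq_bigr => j _; rewrite vG mxE normrM.
apply: le_trans (_ : \sum_j \sum_i `|v 0 i| * (G i j)%:C <= _).
  apply: ler_sum => j _; rewrite mxE; apply: le_trans (ler_norm_sum _ _ _) _.
  apply: ler_sum => i _.
  by rewrite normrM mxE (normc_cmod (G i j)%:C) cmod_real (ger0_norm (G0 i j)).
rewrite exchange_big /=; apply: ler_sum => i _.
rewrite -mulr_sumr -[leRHS]mulr1 ler_wpM2l //.
by rewrite -rmorph_sum -(rmorph1 (real_complex R)) lecR.
Qed.

Lemma det_1_subZ_substochastic {n} {G : 'M[R]_n} {z : R[i]} :
  substochastic G -> 1 < cmod z -> \det (1%:M - z^-1 *: toC G) != 0.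
Proof.
move=> sG z_gt1; have z_neq0 : z != 0.
  by apply: contraTneq z_gt1 => ->; rewrite /cmod Normc.normc0 ltr10.
apply/negP => /det0P [v v_neq0 v_ker].
have vG : v *m toC G = z *: v.
  move/eqP: v_ker; rewrite mulmxBr mulmx1 -scalemxAr subr_eq0 => /eqP {2}->.
  by rewrite scalerA mulfV // scale1r.
have := substochastic_left_eigenvalue sG v_neq0 vG.
by rewrite normc_cmod -(rmorph1 (real_complex R)) lecR leNgt z_gt1.
Qed.

End ComplexMatrices.

(* With P = sum_k z^k U(k) and c = 1/z, the recursion U(k) = A(k+1) + U(k+1) G reads
   P = c (A^*(z) - A(0)) + c (P - U(0)) G. *)
Lemma mulmx_1_sub_factor {K : comPzRingType} {n} {c : K} {A A0 U0 G P : 'M[K]_n} :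
  G = A0 + U0 *m G -> P = c *: (A - A0) + c *: ((P - U0) *m G) ->
  (1%:M - P) *m (1%:M - c *: G) = 1%:M - c *: A.
Proof.
move=> GE PE; rewrite mulmxBl mul1mx mulmxBr mulmx1 -scalemxAr.
have -> : c *: (P *m G) = P - c *: (A - A0) + c *: (U0 *m G).
  by rewrite {2}PE mulmxBl (scalerBr c (P *m G)) [X in X + _]addrC addKr subrK.
rewrite {1}GE scalerDr scalerBr.
move: (c *: A) (c *: A0) (c *: (U0 *m G)) => a a0 u.
rewrite !opprD !opprK !addrA subrK [1%:M - a0 - u - a]addrAC.
by rewrite [1%:M - a0 - a - u + a0]addrAC [1%:M - a0 - a + a0]addrAC !subrK.
Qed.

Lemma is_mxsum_mxsum {R : realType} {m n} {F : nat -> 'M[R]_(m, n)} :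
  mxsum_cvg F -> is_mxsum F (mxsum F).
Proof. by move=> cF i j; rewrite mxE; exact: cF. Qed.

Lemma is_mxsum_mxsum_cvg {R : realType} {m n} {F : nat -> 'M[R]_(m, n)} {S} :
  is_mxsum F S -> mxsum_cvg F.
Proof. by move=> FS i j; apply/cvg_ex; exists (S i j); exact: FS. Qed.

Lemma mxsumE {R : realType} {m n} {F : nat -> 'M[R]_(m, n)} {S} : is_mxsum F S -> mxsum F = S.
Proof. by move=> FS; apply/matrixP=> i j; rewrite mxE; exact: cvg_lim (FS i j). Qed.

Section StochasticSeries.
Context {R : realType} {M : nat} (A : nat -> 'M[R]_M).
Hypothesis A_ge0 : forall k, mx_nonneg (A k).
Hypothesis A_cvg : mxsum_cvg A.
Hypothesis A_stochastic : forall i, \sum_j Abar A i j = 1.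

Definition Arow i k := \sum_j A k i j.

Lemma Arow_ge0 i k : 0 <= Arow i k.
Proof. by apply: sumr_ge0 => j _; exact: A_ge0. Qed.

Lemma cvg_series_Arow i : series (Arow i) @ \oo --> (1 : R).
Proof. by rewrite -(A_stochastic i); exact: is_mxsum_row_sum (is_mxsum_mxsum A_cvg). Qed.

Lemma cvg_series_Arow1 i : series (fun m => Arow i (m + 1)) @ \oo --> 1 - Arow i 0.
Proof. by under eq_fun do rewrite addn1; exact: cvg_series_shift (cvg_series_Arow i). Qed.

Lemma mulmx_A_le_Arow k {Y : 'M[R]_M} i j : substochastic Y -> (A k *m Y) i j <= Arow i k.
Proof.
move=> sY; rewrite mxE; apply: ler_sum => l _.
by rewrite -[leRHS]mulr1 ler_wpM2l ?A_ge0 //; exact: substochastic_entry_le1.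
Qed.

Lemma mxsum_cvg_A_substochastic s {Y : nat -> 'M[R]_M} :
  (forall m, substochastic (Y m)) -> mxsum_cvg (fun m => A (m + s) *m Y m).
Proof.
move=> sY i j; have [l Al _] := ge0_series_tail_cvg s (Arow_ge0 i) (cvg_series_Arow i).
have [l' ? _] := ge0_series_le_cvg (fun m => mx_nonneg_mul (A_ge0 _) (sY m).1 i j)
  (fun m => mulmx_A_le_Arow (m + s) i j (sY m)) Al.
by apply/cvg_ex; exists l'.
Qed.

Definition Gmap (X : 'M[R]_M) := mxsum (fun k => A k *m mxpow X k).

Lemma is_mxsum_Gmap {X} : substochastic X -> is_mxsum (fun k => A k *m mxpow X k) (Gmap X).
Proof.
move=> sX; apply: is_mxsum_mxsum.
have := mxsum_cvg_A_substochastic 0 (fun m => substochastic_pow m sX).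
by under eq_fun do rewrite addn0.
Qed.

Lemma Gmap_substochastic {X} : substochastic X -> substochastic (Gmap X).
Proof.
move=> sX; have GX := is_mxsum_Gmap sX; split=> [i j|i].
  by apply: ge0_lim_series (GX i j) => k; exact: mx_nonneg_mul (A_ge0 k) (mx_nonneg_pow k sX.1) i j.
apply: (ler_lim_series _ (is_mxsum_row_sum i GX) (cvg_series_Arow i)) => k.
exact: row_sum_mulmx_le (A_ge0 k) (substochastic_pow k sX).
Qed.

Lemma Gmap_mono {X Y} : substochastic X -> substochastic Y -> mx_le X Y -> mx_le (Gmap X) (Gmap Y).
Proof.
move=> sX sY XY i j; apply: (ler_lim_series _ (is_mxsum_Gmap sX i j) (is_mxsum_Gmap sY i j)) => k.
by apply: mx_le_mul => //; [exact: mx_nonneg_pow sX.1 | exact: mx_le_pow sX.1 XY].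
Qed.

(* Iterating Gmap from 0 yields a substochastic solution Glim, which dominates the minimal one. *)
Definition Gapprox n := iter n Gmap 0.

Lemma Gapprox_substochastic n : substochastic (Gapprox n).
Proof. by elim: n => [|n IH]; [exact: substochastic0 | exact: Gmap_substochastic]. Qed.

Lemma Gapprox_le n : mx_le (Gapprox n) (Gapprox n.+1).
Proof.
elim: n => [|n IH]; first move=> i j.
  by rewrite [X in X <= _]mxE; exact: (Gmap_substochastic (@substochastic0 R M)).1 i j.
exact: Gmap_mono (Gapprox_substochastic _) (Gapprox_substochastic _) IH.
Qed.

Lemma nondecreasing_Gapprox i j : nondecreasing_seq (fun n => Gapprox n i j).
Proof. by apply/nondecreasing_seqP => n; exact: Gapprox_le. Qed.

Definition Glim : 'M[R]_M := \matrix_(i, j) limn (fun n => Gapprox n i j).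

Lemma cvg_Gapprox i j : (fun n => Gapprox n i j) @ \oo --> Glim i j.
Proof.
rewrite mxE; apply: nondecreasing_is_cvgn; first exact: nondecreasing_Gapprox.
by exists 1 => _ [n _ <-]; exact: substochastic_entry_le1 (Gapprox_substochastic n).
Qed.

Lemma Gapprox_le_Glim n : mx_le (Gapprox n) Glim.
Proof.
move=> i j; rewrite mxE; apply: nondecreasing_cvgn_le; first exact: nondecreasing_Gapprox.
by apply/cvg_ex; exists (Glim i j); exact: cvg_Gapprox.
Qed.

Lemma Glim_substochastic : substochastic Glim.
Proof.
split=> [i j|i]; first exact: le_trans ((Gapprox_substochastic 0).1 i j) (Gapprox_le_Glim 0 i j).
have Gi : (fun n => \sum_j Gapprox n i j) @ \oo --> \sum_j Glim i j.
  by apply: cvgn_sum => j; exact: cvg_Gapprox.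
rewrite -(cvg_lim (@Rhausdorff R) Gi); apply: limr_le; first by apply/cvg_ex; eexists; exact: Gi.
by near=> n; exact: (Gapprox_substochastic n).2.
Unshelve. all: by end_near.
Qed.

Lemma Glim_le_Gmap : mx_le Glim (Gmap Glim).
Proof.
move=> i j; rewrite -(cvg_lim (@Rhausdorff R) (cvg_Gapprox i j)); apply: limr_le.
  by apply/cvg_ex; eexists; exact: cvg_Gapprox.
near=> n; apply: le_trans (Gapprox_le n i j) _.
exact: Gmap_mono (Gapprox_substochastic n) Glim_substochastic (Gapprox_le_Glim n) i j.
Unshelve. all: by end_near.
Qed.

(* Each partial sum of Gmap Glim is a limit of partial sums of Gmap (Gapprox n) <= Gapprox n.+1. *)
Lemma Gmap_Glim_le : mx_le (Gmap Glim) Glim.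
Proof.
move=> i j; have GG := is_mxsum_Gmap Glim_substochastic i j.
rewrite -(cvg_lim (@Rhausdorff R) GG); apply: limr_le; first by apply/cvg_ex; eexists; exact: GG.
near=> N.
have cvgN : (fun n => series (fun k => (A k *m mxpow (Gapprox n) k) i j) N) @ \oo -->
            series (fun k => (A k *m mxpow Glim k) i j) N.
  apply: cvgn_sum => k; apply: cvg_mulmx => [? ?|]; first exact: cvg_cst.
  by apply: cvg_mxpow; exact: cvg_Gapprox.
rewrite -(cvg_lim (@Rhausdorff R) cvgN); apply: limr_le.
  by apply/cvg_ex; eexists; exact: cvgN.
near=> n; apply: le_trans (Gapprox_le_Glim n.+1 i j).
apply: (ge0_series_le_lim _ (is_mxsum_Gmap (Gapprox_substochastic n) i j) N) => k.
exact: mx_nonneg_mul (A_ge0 k) (mx_nonneg_pow k (Gapprox_substochastic n).1) i j.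
Unshelve. all: by end_near.
Qed.

Lemma Glim_solves : solves_G_eq A Glim.
Proof.
have GlimE : Gmap Glim = Glim.
  by apply/matrixP=> i j; apply/eqP; rewrite eq_le Gmap_Glim_le Glim_le_Gmap.
have := is_mxsum_Gmap Glim_substochastic; rewrite GlimE => GS.
by split; [exact: is_mxsum_mxsum_cvg GS | exact: mxsumE].
Qed.

Lemma minimal_solution_substochastic {G} :
  is_minimal_nonneg_solution A G -> substochastic G.
Proof.
case=> G0 _ Gmin; split => // i; apply: le_trans (Glim_substochastic.2 i).
by apply: ler_sum => j _; exact: Gmin _ Glim_substochastic.1 Glim_solves i j.
Qed.

Variable G : 'M[R]_M.
Hypothesis G_min : is_minimal_nonneg_solution A G.

Local Notation U := (Umat A G).

Lemma G_substochastic : substochastic G.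
Proof. exact: minimal_solution_substochastic G_min. Qed.

Lemma is_mxsum_G : is_mxsum (fun k => A k *m mxpow G k) G.
Proof. by case: G_min => _ [cG GE] _; rewrite -[X in is_mxsum _ X]GE; exact: is_mxsum_mxsum. Qed.

Lemma is_mxsum_Umat k : is_mxsum (fun m => A (m + k.+1) *m mxpow G m) (U k).
Proof.
apply/is_mxsum_mxsum/mxsum_cvg_A_substochastic => m.
exact: substochastic_pow G_substochastic.
Qed.

Lemma Umat_ge0 k : mx_nonneg (U k).
Proof.
move=> i j; apply: ge0_lim_series (is_mxsum_Umat k i j) => m.
exact: mx_nonneg_mul (A_ge0 _) (mx_nonneg_pow m G_substochastic.1) i j.
Qed.

Lemma is_mxsum_A_powG_rec s S :
  is_mxsum (fun m => A (m + s) *m mxpow G m) S -> S = A s + U s *m G.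
Proof.
move=> FS; apply/eqP; rewrite addrC -subr_eq; apply/eqP.
apply: is_mxsum_unique (is_mxsum_mulmxr G (is_mxsum_Umat s)).
have := is_mxsum_shift FS; rewrite [mxpow G 0]/= mulmx1 add0n.
by apply: eq_is_mxsum => m; rewrite addSnnS mxpowSr mulmxA.
Qed.

Lemma UmatE k : U k = A k.+1 + U k.+1 *m G.
Proof. exact/is_mxsum_A_powG_rec/is_mxsum_Umat. Qed.

Lemma G_A0_U0 : G = A 0 + U 0 *m G.
Proof.
by apply: is_mxsum_A_powG_rec; apply: (eq_is_mxsum _ is_mxsum_G) => m; rewrite addn0.
Qed.

Lemma row_sum_U0_le i : \sum_l U 0 i l <= 1 - Arow i 0.
Proof.
apply: ler_lim_series (is_mxsum_row_sum i (is_mxsum_Umat 0)) _ => [m|].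
  exact: row_sum_mulmx_le (A_ge0 _) (substochastic_pow m G_substochastic).
exact: cvg_series_Arow1.
Qed.

(* Each term of row j of Z has row sum at most that of row j of A(m + s); reaching the
   total L forces equality termwise, so Y_m is stochastic wherever A(m + s) charges. *)
Lemma saturated_row {s} {Y : nat -> 'M[R]_M} {Z j L} :
  (forall m, substochastic (Y m)) -> is_mxsum (fun m => A (m + s) *m Y m) Z ->
  series (fun m => Arow j (m + s)) @ \oo --> L -> L <= \sum_l Z j l ->
  forall m j', 0 < A (m + s) j j' ->
  \sum_l Y m j' l = 1 /\ (forall l, 0 < Y m j' l -> 0 < Z j l).
Proof.
move=> sY ZS AL LZ m j' Ajj'.
have term_ge0 k : 0 <= \sum_l (A (k + s) *m Y k) j l.
  by apply: sumr_ge0 => l _; exact: mx_nonneg_mul (A_ge0 _) (sY k).1 j l.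
have term_le k : \sum_l (A (k + s) *m Y k) j l <= Arow j (k + s).
  exact: row_sum_mulmx_le (A_ge0 _) (sY k).
have ZL : \sum_l Z j l = L.
  by apply/eqP; rewrite eq_le LZ (ler_lim_series term_le (is_mxsum_row_sum j ZS) AL).
have rowZ : series (fun k => \sum_l (A (k + s) *m Y k) j l) @ \oo --> L.
  by rewrite -ZL; exact: is_mxsum_row_sum.
split; first exact: (row_sum_mulmx_eq j (A_ge0 _) (sY m)
                       (eq_lim_series_termwise term_ge0 term_le rowZ AL m)).
move=> l Yl; apply: lt_le_trans (ge0_term_le_lim _ (ZS j l) m); last first.
  by move=> k; exact: mx_nonneg_mul (A_ge0 _) (sY k).1 j l.
rewrite mxE (bigD1 j') //= ltr_pwDl ?mulr_gt0 //.
by apply: sumr_ge0 => k _; apply: mulr_ge0; [exact: A_ge0 | exact: (sY m).1].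
Qed.

Section TransientLevels.
Variables (M0 : nat) (B0 : 'M[R]_M0) (B : nat -> 'M[R]_(M0, M)) (C0 : 'M[R]_(M, M0)).
Hypothesis M0_gt0 : (0 < M0)%N.
Hypothesis T_irr : T_irreducible A B0 B C0.

Section MaxModulus.
Variable w : 'I_M -> R.
Hypothesis w_fix : forall i, w i = \sum_l U 0 i l * w l.
Variable i0 : 'I_M.
Hypothesis w_max : forall j, `|w j| <= `|w i0|.
Hypothesis w_i0_gt0 : 0 < `|w i0|.

Definition max_modulus l := `|w l| = `|w i0|.

Lemma max_modulus_U0 {i} : max_modulus i ->
  \sum_l U 0 i l = 1 /\ forall l, 0 < U 0 i l -> max_modulus l.
Proof.
rewrite /max_modulus; set c := `|w i0| => wi.
have U0_le1 : \sum_l U 0 i l <= 1.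
  by apply: le_trans (row_sum_U0_le i) _; rewrite lerBlDr lerDl Arow_ge0.
have c_le : c <= \sum_l U 0 i l * `|w l|.
  rewrite -wi w_fix; apply: le_trans (ler_norm_sum _ _ _) _.
  by apply: ler_sum => l _; rewrite normrM ger0_norm //; exact: Umat_ge0.
have le_cU : \sum_l U 0 i l * `|w l| <= c * \sum_l U 0 i l.
  rewrite mulr_sumr; apply: ler_sum => l _; rewrite mulrC ler_wpM2r //.
  exact: Umat_ge0.
have U0_row1 : \sum_l U 0 i l = 1.
  apply/eqP; rewrite eq_le U0_le1 -(ler_pM2l w_i0_gt0) mulr1.
  exact: le_trans c_le le_cU.
split=> // l Uil.
have gap0 : \sum_k U 0 i k * (c - `|w k|) = 0.
  under eq_bigr do rewrite mulrBr.
  rewrite sumrB -mulr_suml U0_row1 mul1r; apply/eqP; rewrite subr_eq0 eq_le c_le /=.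
  by apply: le_trans le_cU _; rewrite U0_row1 mulr1.
have gap_ge0 k : true -> 0 <= U 0 i k * (c - `|w k|).
  by move=> _; rewrite mulr_ge0 ?subr_ge0 //; exact: Umat_ge0.
have /eqP := (psumr_eq0P gap_ge0 gap0) l isT.
by rewrite mulf_eq0 (gt_eqF Uil) /= subr_eq0 => /eqP.
Qed.

Definition saturated p j :=
  \sum_l mxpow G p j l = 1 /\ forall l, 0 < mxpow G p j l -> max_modulus l.

Lemma saturated0_max_modulus {i} : saturated 0 i -> max_modulus i.
Proof. by case=> _; apply; rewrite /= mxE eqxx ltr01. Qed.

Lemma saturated_level1 {i} : saturated 0 i ->
  Arow i 0 = 0 /\ forall m j', 0 < A (m + 1) i j' -> saturated m j'.
Proof.
move=> /saturated0_max_modulus wi; have [U0_row1 U0_max] := max_modulus_U0 wi.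
split.
  apply/eqP; rewrite eq_le Arow_ge0 andbT.
  by have := row_sum_U0_le i; rewrite U0_row1 lerBrDl gerDr.
move=> m j' Aij'.
have [|Gj'1 Gsupp] := saturated_row (fun m => substochastic_pow m G_substochastic)
  (is_mxsum_Umat 0) (cvg_series_Arow1 i) _ m j' Aij'.
  by rewrite U0_row1 lerBlDr lerDl Arow_ge0.
by split=> // l /Gsupp; exact: U0_max.
Qed.

Lemma saturated_levelS {q j} : saturated q.+1 j ->
  forall m j', 0 < A m j j' -> saturated (m + q) j'.
Proof.
move=> [Gj1 Gsupp] m j' Ajj'.
have GqS : is_mxsum (fun m => A (m + 0) *m (mxpow G m *m mxpow G q)) (mxpow G q.+1).
  by apply: (eq_is_mxsum _ (is_mxsum_mulmxr (mxpow G q) is_mxsum_G)) => k; rewrite addn0 mulmxA.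
have AL : series (fun m => Arow j (m + 0)) @ \oo --> (1 : R).
  by under eq_fun do rewrite addn0; exact: cvg_series_Arow.
have sY k : substochastic (mxpow G k *m mxpow G q).
  by apply: substochastic_mul; exact: substochastic_pow G_substochastic.
have Ajj0 : 0 < A (m + 0) j j' by rewrite addn0.
have [|Gj'1 Gj'supp] := saturated_row sY GqS AL _ m j' Ajj0; first by rewrite Gj1.
by rewrite /saturated mxpowD; split=> // l /Gj'supp; exact: Gsupp.
Qed.

(* inr (p.+1, j) is the state (p + 2, j); these states only lead to such states, so
   the chain started there never reaches level 0. *)
Definition trapped (x : state M0 M) : Prop :=
  if x is inr (p.+1, j) then saturated p j else False.

Lemma trapped_step {x y} : trapped x -> 0 < Tmat A B0 B C0 x y -> trapped y.
Proof.
case: x => [//|[[//|p] j]] /= sat_pj.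
case: y => [j0|[l j']] /=; first by rewrite ltxx.
case: ifP => [le_pl|_]; last by rewrite ltxx.
case: p sat_pj le_pl => [|q] sat_j le_ql Ajj'.
  have [A0j sat1] := saturated_level1 sat_j.
  case: l le_ql Ajj' => [|l] _ Ajj'; last by apply: sat1; rewrite addn1.
  have := entry_le_row_sum j j' (A_ge0 0); rewrite -/(Arow j 0) A0j.
  by move=> /(lt_le_trans Ajj'); rewrite ltxx.
case: l le_ql Ajj' => [//|l] le_ql Ajj'.
by have := saturated_levelS sat_j _ _ Ajj'; rewrite !subSS subnK.
Qed.

Lemma trapped_reach {x y} : T_reach A B0 B C0 x y -> trapped x -> trapped y.
Proof. by elim=> // y' z _ IH Ty'z /IH ty'; exact: trapped_step ty' Ty'z. Qed.

Lemma max_modulus_absurd : False.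
Proof.
have sat0 : saturated 0 i0.
  split=> [|l]; first exact: row_sum1.
  by rewrite /= mxE; case: eqP => [<- //|_]; rewrite ltxx.
exact: trapped_reach (T_irr (inr (1%N, i0)) (inl (Ordinal M0_gt0))) sat0.
Qed.

End MaxModulus.

Lemma unitmx_1_sub_U0 : (1%:M - U 0) \in unitmx.
Proof.
rewrite unitmxE unitfE -det_tr; apply/negP => /det0P [v v_neq0 v_ker].
pose w i := v 0 i.
have w_fix i : w i = \sum_l U 0 i l * w l.
  move/eqP: v_ker; rewrite linearB /= trmx1 mulmxBr mulmx1 subr_eq0 => /eqP vE.
  by rewrite /w {1}vE mxE; apply: eq_bigr => l _; rewrite mxE mulrC.
have /rV0Pn [k wk] := v_neq0.
have [i0 _ w_max] := @arg_maxP _ R _ k xpredT (fun i => `|w i|) isT.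
apply: (max_modulus_absurd _ w_fix i0) => [j|]; first exact: w_max.
by apply: lt_le_trans (w_max k isT); rewrite normr_gt0.
Qed.

End TransientLevels.

Section GeneratingFunctions.
Variables (z : R[i]) (r : R).
Hypothesis z_gt1 : 1 < cmod z.
Hypothesis z_lt_r : cmod z < r.
Hypothesis A_r : forall i j, cvgn (series (fun k => `|A k i j| * r ^+ k)).

Let r_gt1 : 1 < r := lt_trans z_gt1 z_lt_r.
Let r_gt0 : 0 < r := lt_trans ltr01 r_gt1.

Let z_neq0 : z != 0.
Proof. by apply: contraTneq z_gt1 => ->; rewrite /cmod Normc.normc0 ltr10. Qed.

Lemma is_mxsum_Astar : is_mxsum (fun k => z ^+ k *: toC (A k)) (Astar A z).
Proof.
apply: is_mxsum_cmxsum => i j; apply: (cmod_series_le_cvg _ (A_r i j)) => k.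
rewrite !mxE cmodM cmodX cmod_real mulrC; apply: ler_wpM2l => //.
by apply: lerXn2r; rewrite ?nnegrE ?cmod_ge0 ?ltW.
Qed.

Definition Arow_r i := limn (series (fun k => Arow i k * r ^+ k)).

Lemma cvg_series_Arow_r i : series (fun k => Arow i k * r ^+ k) @ \oo --> Arow_r i.
Proof.
suff : cvgn (series (fun k => Arow i k * r ^+ k)) by [].
have -> : series (fun k => Arow i k * r ^+ k) =
          (fun N => \sum_j series (fun k => `|A k i j| * r ^+ k) N).
  apply/funext=> N; rewrite /series /= exchange_big /=; apply: eq_bigr => k _.
  by rewrite /Arow mulr_suml; apply: eq_bigr => j _; rewrite ger0_norm // A_ge0.
by apply/cvg_ex; eexists; apply: cvgn_sum => j; exact: A_r.
Qed.

Lemma Umat_le k i j : U k i j <= Arow_r i / r ^+ k.+1.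
Proof.
have Ar_ge0 n : 0 <= Arow i n * r ^+ n by rewrite mulr_ge0 ?Arow_ge0 // exprn_ge0 // ltW.
have [l tail le_l] := ge0_series_tail_cvg k.+1 Ar_ge0 (cvg_series_Arow_r i).
have rk_neq0 : r ^+ k.+1 != 0 by rewrite expf_neq0 ?gt_eqF.
have tail_r : series (fun m => Arow i (m + k.+1) * r ^+ (m + k.+1) / r ^+ k.+1) @ \oo -->
              l / r ^+ k.+1.
  have -> : series (fun m => Arow i (m + k.+1) * r ^+ (m + k.+1) / r ^+ k.+1) =
            (fun N => series (fun m => Arow i (m + k.+1) * r ^+ (m + k.+1)) N / r ^+ k.+1).
    by apply/funext=> N; rewrite /series /= mulr_suml.
  exact: cvgM tail (cvg_cst _).
apply: (@le_trans _ _ (l / r ^+ k.+1)); last by rewrite ler_wpM2r // invr_ge0 exprn_ge0 // ltW.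
apply: (ler_lim_series _ (is_mxsum_Umat k i j) tail_r) => m.
apply: le_trans (mulmx_A_le_Arow _ _ _ (substochastic_pow m G_substochastic)) _.
rewrite exprD mulrA mulrK ?unitfE // -[leLHS]mulr1 ler_wpM2l ?Arow_ge0 //.
by rewrite exprn_ege1 // ltW.
Qed.

Definition Ustar := cmxsum (fun k => z ^+ k *: toC (U k)).

(* U(k) = O(r^-k), so sum_k z^k U(k) is dominated by a geometric series of ratio |z|/r < 1. *)
Lemma is_mxsum_Ustar : is_mxsum (fun k => z ^+ k *: toC (U k)) Ustar.
Proof.
apply: is_mxsum_cmxsum => i j.
apply: (cmod_series_le_cvg (b := geometric (Arow_r i / r) (cmod z / r))) => [k|].
  rewrite 2!mxE cmodM cmodX cmod_real ger0_norm; last exact: Umat_ge0.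
  have -> : geometric (Arow_r i / r) (cmod z / r) k = cmod z ^+ k * (Arow_r i / r ^+ k.+1).
    by rewrite /geometric /= expr_div_n exprS; field; rewrite expf_neq0 gt_eqF.
  by apply: ler_wpM2l; [rewrite exprn_ge0 ?cmod_ge0 | exact: Umat_le].
apply: is_cvg_geometric_series.
by rewrite ger0_norm ?divr_ge0 ?cmod_ge0 ?ltW // ltr_pdivrMr // mul1r.
Qed.

Lemma is_mxsum_shiftZ {F : nat -> 'M[R]_M} {S} :
  is_mxsum (fun k => z ^+ k *: toC (F k)) S ->
  is_mxsum (fun k => z ^+ k *: toC (F k.+1)) (z^-1 *: (S - toC (F 0%N))).
Proof.
move=> FS; have := is_mxsumZ z^-1 (is_mxsum_shift FS); rewrite expr0 scale1r.
by apply: eq_is_mxsum => k; rewrite scalerA exprS mulrA mulVf // mul1r.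
Qed.

Lemma UstarE : Ustar = z^-1 *: (Astar A z - toC (A 0)) + z^-1 *: ((Ustar - toC (U 0)) *m toC G).
Proof.
apply: is_mxsum_unique is_mxsum_Ustar _; rewrite scalemxAl.
apply: (eq_is_mxsum _ (is_mxsumD (is_mxsum_shiftZ is_mxsum_Astar)
                     (is_mxsum_mulmxr (toC G) (is_mxsum_shiftZ is_mxsum_Ustar)))) => k.
by rewrite [U k]UmatE /toC map_mxD map_mxM scalerDr scalemxAl.
Qed.

Lemma RstarE : Rstar A G z = (Ustar - toC (U 0)) *m toC (invmx (1%:M - U 0)).
Proof.
apply: cmxsumE; rewrite -[X in is_mxsum _ X]add0r.
apply: is_mxsum_unshift.
have := is_mxsum_mulmxr (toC (invmx (1%:M - U 0))) (is_mxsum_shift is_mxsum_Ustar).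
rewrite expr0 scale1r; apply: eq_is_mxsum => k /=.
by rewrite /Rmat /toC map_mxM scalemxAl.
Qed.

Lemma factor_1_sub_GammaAstar : (1%:M - U 0) \in unitmx ->
  1%:M - GammaAstar A z =
    (1%:M - Rstar A G z) *m (1%:M - toC (U 0)) *m (1%:M - z^-1 *: toC G).
Proof.
move=> U0_unit; have GE : toC G = toC (A 0) + toC (U 0) *m toC G.
  by rewrite {1}G_A0_U0 /toC map_mxD map_mxM.
rewrite /GammaAstar -(mulmx_1_sub_factor GE UstarE); congr (_ *m _).
have NU : toC (invmx (1%:M - U 0)) *m (1%:M - toC (U 0)) = 1%:M.
  by rewrite -toC1_sub /toC -map_mxM mulVmx // map_mx1.
by rewrite RstarE mulmxBl mul1mx -mulmxA NU mulmx1 opprB addrA subrK.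
Qed.

End GeneratingFunctions.

End StochasticSeries.

Theorem proposition2p3 (R : realType) (M0 M : nat)
  (A : nat -> 'M[R]_M) (B0 : 'M[R]_M0) (B : nat -> 'M[R]_(M0, M))
  (C0 : 'M[R]_(M, M0)) (G : 'M[R]_M) :
  (0 < M0)%N -> (0 < M)%N ->
  (* nonnegative blocks *)
  (forall k, mx_nonneg (A k)) -> mx_nonneg B0 ->
  (forall k, (0 < k)%N -> mx_nonneg (B k)) -> mx_nonneg C0 ->
  (* A = sum_k A(k) is stochastic *)
  mxsum_cvg A -> (forall i, \sum_j Abar A i j = 1) ->
  (* B(0) e + sum_{k>=1} B(k) e = e *)
  (forall i, cvgn (series (fun k => \sum_j B k.+1 i j)) /\
             \sum_j B0 i j + limn (series (fun k => \sum_j B k.+1 i j)) = 1) ->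
  (* C(0) e + sum_{k>=1} A(k) e = e  (rows of level 1 of T sum to one) *)
  (forall i, cvgn (series (fun k => \sum_j A k.+1 i j)) /\
             \sum_j C0 i j + limn (series (fun k => \sum_j A k.+1 i j)) = 1) ->
  (* G is the minimal nonnegative solution of X = sum_k A(k) X^k *)
  is_minimal_nonneg_solution A G ->
  (* T and A irreducible, r_A > 1 *)
  T_irreducible A B0 B C0 -> A_irreducible A ->
  (1 < rA A)%E ->
  forall z : R[i], 1 < cmod z -> ((cmod z)%:E < rA A)%E ->
    (\det (1%:M - GammaAstar A z) = 0 <-> \det (1%:M - Rstar A G z) = 0).
Proof.
move=> M0_gt0 _ A_ge0 _ _ _ A_cvg A_st _ _ G_min T_irr _ _ z z_gt1 z_lt_rA.
have [_ [r [_ A_r] <-]] := ereal_sup_gt z_lt_rA; rewrite lte_fin => z_lt_r.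
have U0_unit := unitmx_1_sub_U0 A A_ge0 A_cvg A_st G G_min M0 B0 B C0 M0_gt0 T_irr.
have det_U0 : \det (1%:M - toC (Umat A G 0)) != 0.
  by rewrite -toC1_sub det_map_mx fmorph_eq0 -unitfE -unitmxE.
have det_G := det_1_subZ_substochastic (G_substochastic A A_ge0 A_cvg A_st G G_min) z_gt1.
rewrite (factor_1_sub_GammaAstar _ A_ge0 A_cvg A_st _ G_min _ _ z_gt1 z_lt_r A_r U0_unit).
rewrite !det_mulmx.
split=> [/eqP|->]; last by rewrite !mul0r.
by rewrite !mulf_eq0 (negPf det_U0) (negPf det_G) !orbF => /eqP.
Qed.
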